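(* Consider the MAC-phase training model described in the context, with training length $L_S$ and minimum-mean-square-error $e_R(\mathbf S)$. (i) If $L_S\ge N_1+N_2$, then for every $\varepsilon>0$ there exists $\mathbf S\in\mathbb C^{(N_1+N_2)\times L_S}$ (with no bound on the powers $\mathrm{Tr}(\mathbf S_i\mathbf S_i^H)$) such that $e_R(\mathbf S)<\varepsilon$; i.e. an arbitrarily small MSE can be achieved with unlimited source power when $L_S= N_1+N_2$. (ii) If $L_S<N_1+N_2$, then for every $\mathbf S\in\mathbb C^{(N_1+N_2)\times L_S}$ (in particular even with unlimited source power) $$e_R(\mathbf S)\;\ge\;\sum_{n=1}^{M}\sigma_{r,H,n}\sum_{m=L_S+1}^{N_1+N_2}\sigma_{t,H,m},$$ where $\sigma_{r,H,1},\dots,\sigma_{r,H,M}$ are the eigenvalues of $\mathbf Z_{r,H}$ and $\sigma_{t,H,1}\ge\dots\ge\sigma_{t,H,N_1+N_2}$ are the eigenvalues of $\mathbf Z_{t,H}=\mathrm{Blkdiag}(\mathbf Z_{t,H_1},\mathbf Z_{t,H_2})$ in decreasing order. (iii) Suppose $\mathbf K_{q,R}=q\mathbf I_{L_S}$ with $q>0$, let $\tau_1,\tau_2>0$, and let $\mathbf S^{\rm opt}=[\mathbf S_1^{T},\mathbf S_2^{T}]^T$ be an optimal solution of $\min_{\mathbf S} e_R(\mathbf S)$ subject to $\mathrm{Tr}(\mathbf S_i\mathbf S_i^H)\le\tau_i$, $i=1,2$, with $\mathrm{Rank}(\mathbf S^{\rm opt})=r$. Then there exist $\tilde{\mathbf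 S}_1\in\mathbb C^{N_1\times r}$, $\tilde{\mathbf S}_2\in\mathbb C^{N_2\times r}$ with $\mathrm{Tr}(\tilde{\mathbf S}_i\tilde{\mathbf S}_i^H)=\mathrm{Tr}(\mathbf S_i\mathbf S_i^H)$, $i=1,2$, such that the MSE of the same model with training length $r$ (and temporal disturbance covariance $q\mathbf I_r$) evaluated at $\tilde{\mathbf S}=[\tilde{\mathbf S}_1^T,\tilde{\mathbf S}_2^T]^T$ equals $e_R(\mathbf S^{\rm opt})$; i.e. the training length can be reduced to $L_S=r$.
   Context: MAC phase of a MIMO two-way relay system: sources $S_1,S_2$ with $N_1,N_2$ antennas, relay with $M$ antennas. Let $\mathbf Z_{t,H_i}\in\mathbb C^{N_i\times N_i}$ ($i=1,2$) and $\mathbf Z_{r,H}\in\mathbb C^{M\times M}$ be Hermitian positive definite, with factorizations $\mathbf Z_{t,H_i}=\mathbf C_{t,H_i}\mathbf C_{t,H_i}^H$, $\mathbf Z_{r,H}=\mathbf C_{r,H}\mathbf C_{r,H}^H$ (square invertible factors); put $\mathbf C_{t,H}=\mathrm{Blkdiag}(\mathbf C_{t,H_1},\mathbf C_{t,H_2})$. The channels are $\mathbf H_i=\mathbf C_{r,H}\mathbf W_{H_i}\mathbf C_{t,H_i}^T\in\mathbb C^{M\times N_i}$ with $\mathbf W_{H_1},\mathbf W_{H_2}$ having i.i.d. $\mathcal{CN}(0,1)$ entries. The relay receives $\mathbf Y_R=\mathbf H_1\mathbf S_1+\mathbf H_2\mathbf S_2+\mathbf N_R$, where $\mathbf S_i\in\mathbb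 C^{N_i\times L_S}$ are training sequences, $\mathbf S=[\mathbf S_1^T,\mathbf S_2^T]^T$, and $\mathrm{vec}(\mathbf N_R)\sim\mathcal{CN}(\mathbf 0,\mathbf K_R)$ independent of the channels, $\mathbf K_R=\mathbf K_{q,R}\otimes\mathbf K_{r,R}$ with $\mathbf K_{q,R}\in\mathbb C^{L_S\times L_S}$, $\mathbf K_{r,R}\in\mathbb C^{M\times M}$ Hermitian positive definite, and $\mathbf K_{r,R}$ has the same eigenvectors as $\mathbf Z_{r,H}$. The (linear) MMSE estimation error of $\mathrm{vec}([\mathbf H_1,\mathbf H_2])$ is $e_R(\mathbf S)=\mathrm{Tr}\big[\mathbf C_{0,H}\big(\mathbf I+\mathbf F^H\mathbf K_R^{-1}\mathbf F\big)^{-1}\big]$ with $\mathbf F=\mathbf S^T\mathbf C_{t,H}\otimes\mathbf C_{r,H}$ and $\mathbf C_{0,H}=\mathbf C_{t,H}^H\mathbf C_{t,H}\otimes\mathbf C_{r,H}^H\mathbf C_{r,H}$. *)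

(* Complex scalars: an arbitrary numClosedFieldType C
   (e.g. algC, or R[i] for a real closed field R). *)
From mathcomp Require Import all_boot all_order all_algebra.
From mathcomp Require Export mxtens.
Set Implicit Arguments. Unset Strict Implicit. Unset Printing Implicit Defensive.
Import Order.TTheory GRing.Theory Num.Theory.
Local Open Scope ring_scope.

Definition ctmx (C : numClosedFieldType) m n (A : 'M[C]_(m, n)) : 'M[C]_(n, m) :=
  (map_mx Num.conj A)^T.

Definition posdef (C : numClosedFieldType) n (A : 'M[C]_n) : Prop :=
  ctmx A = A /\ forall x : 'cV[C]_n, x != 0 -> 0 < (ctmx x *m A *m x) 0 0.

Definition unitary (C : numClosedFieldType) n (U : 'M[C]_n) : Prop :=
  U *m ctmx U = 1%:M.

(* Z and K have the same eigenvectors: simultaneously unitarily diagonalizable *)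
Definition same_eigvecs (C : numClosedFieldType) n (Z K : 'M[C]_n) : Prop :=
  exists (U : 'M[C]_n) (a b : 'rV[C]_n), unitary U /\
    Z = U *m diag_mx a *m ctmx U /\ K = U *m diag_mx b *m ctmx U.

Definition eigvals_of (C : numClosedFieldType) n (A : 'M[C]_n) (s : 'rV[C]_n) : Prop :=
  char_poly A = \prod_(i < n) ('X - (s 0 i)%:P).

Definition blkdiag (C : numClosedFieldType) n1 n2 (A : 'M[C]_n1) (B : 'M[C]_n2)
  : 'M[C]_(n1 + n2) := block_mx A 0 0 B.

Definition eR (C : numClosedFieldType) (N1 N2 M LS : nat)
  (Ct1 : 'M[C]_N1) (Ct2 : 'M[C]_N2) (Cr : 'M[C]_M)
  (Kq : 'M[C]_LS) (Kr : 'M[C]_M) (S : 'M[C]_(N1 + N2, LS)) : C :=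
  let Ct := blkdiag Ct1 Ct2 in
  let F := (S^T *m Ct) *t Cr in
  let KR := Kq *t Kr in
  let C0 := (ctmx Ct *m Ct) *t (ctmx Cr *m Cr) in
  \tr (C0 *m invmx (1%:M + ctmx F *m invmx KR *m F)).

Definition pow_mx (C : numClosedFieldType) m n (A : 'M[C]_(m, n)) : C :=
  \tr (A *m ctmx A).

From mathcomp Require Import all_boot all_order all_algebra.
From mathcomp Require Import spectral.
Import Order.TTheory GRing.Theory Num.Theory.
Local Open Scope ring_scope.
Set Implicit Arguments. Unset Strict Implicit. Unset Printing Implicit Defensive.

(** Write the relay-side covariances in their common eigenbasis,
    [Z_{r,H} = U diag(a) U^H] and [K_{r,R} = U diag(b) U^H], and diagonalise the
    Hermitian matrix [G^H K_{q,R}^-1 G = W diag(y) W^H], where [G = S^T C_{t,H}].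
    The error then separates as
      [e_R(S) = sum_n a_n sum_j g_j / (1 + (a_n / b_n) y_j)],
    with [g_j = (W^H C_{t,H}^H C_{t,H} W)_jj >= 0].
    (i) If [L_S >= N1 + N2], the training [S = T [I 0]] makes [G] left invertible,
    so all [y_j] are positive and grow like [T^2]: every term is [O(1/T)].
    (ii) If [L_S < N1 + N2], [G^H K_{q,R}^-1 G] has rank at most [L_S], so at least
    [N1 + N2 - L_S] of the [y_j] vanish and their terms contribute
    [sum_n a_n sum_{y_j = 0} g_j].  With [C_{t,H}^H C_{t,H} = V diag(s) V^H], whose
    spectrum is that of [Z_{t,H}], each [g_j] is an average of the [s_i] with the
    doubly stochastic weights [|(V^H W)_ij|^2], so any [N1 + N2 - L_S] of the [g_j]
    add up to at least the [N1 + N2 - L_S] smallest eigenvalues.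
    (iii) When [K_{q,R} = q I], [e_R] depends on [S] only through [S S^H], which is
    unchanged when [S] is replaced by its coordinates in an orthonormal basis of its
    row space. *)

Section ConjugateTranspose.
Variable C : numClosedFieldType.
Implicit Types m n p : nat.

Lemma ctmxE m n (A : 'M[C]_(m, n)) : ctmx A = \matrix_(i, j) (A j i)^*.
Proof. by apply/matrixP=> i j; rewrite !mxE. Qed.

Lemma ctmxK m n (A : 'M[C]_(m, n)) : ctmx (ctmx A) = A.
Proof. by apply/matrixP=> i j; rewrite !ctmxE !mxE conjCK. Qed.

Lemma ctmx_mul m n p (A : 'M[C]_(m, n)) (B : 'M[C]_(n, p)) :
  ctmx (A *m B) = ctmx B *m ctmx A.
Proof. by rewrite /ctmx map_mxM trmx_mul. Qed.

Lemma ctmxZ m n (a : C) (A : 'M[C]_(m, n)) : ctmx (a *: A) = a^* *: ctmx A.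
Proof. by apply/matrixP=> i j; rewrite !ctmxE !mxE rmorphM. Qed.

Lemma ctmx0 m n : ctmx (0 : 'M[C]_(m, n)) = 0.
Proof. by apply/matrixP=> i j; rewrite !ctmxE !mxE rmorph0. Qed.

Lemma ctmx1 n : ctmx (1%:M : 'M[C]_n) = 1%:M.
Proof. by apply/matrixP=> i j; rewrite !ctmxE !mxE rmorphMn rmorph1 eq_sym. Qed.

Lemma ctmx_congr_herm m n (G : 'M[C]_(m, n)) (K : 'M[C]_m) :
  ctmx K = K -> ctmx (ctmx G *m K *m G) = ctmx G *m K *m G.
Proof. by move=> K_herm; rewrite !ctmx_mul ctmxK K_herm mulmxA. Qed.

Lemma ctmx_eq0 m n (A : 'M[C]_(m, n)) : ctmx A = 0 -> A = 0.
Proof. by move=> A0; rewrite -[A]ctmxK A0 ctmx0. Qed.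

Lemma ctmx_tr m n (A : 'M[C]_(m, n)) : ctmx A^T = map_mx Num.conj A.
Proof. by apply/matrixP=> i j; rewrite !ctmxE !mxE. Qed.

Lemma map_conj_trmx m n (A : 'M[C]_(m, n)) : map_mx Num.conj A^T = ctmx A.
Proof. by rewrite /ctmx map_trmx. Qed.

Lemma ctmx_tens m n p q (A : 'M[C]_(m, n)) (B : 'M[C]_(p, q)) :
  ctmx (A *t B) = ctmx A *t ctmx B.
Proof. by apply/matrixP=> i j; rewrite !ctmxE !mxE rmorphM. Qed.

Lemma ctmx_col m1 m2 n (A : 'M[C]_(m1, n)) (B : 'M[C]_(m2, n)) :
  ctmx (col_mx A B) = row_mx (ctmx A) (ctmx B).
Proof. by rewrite /ctmx map_col_mx tr_col_mx. Qed.

Lemma ctmx_block m1 m2 n1 n2 (A : 'M[C]_(m1, n1)) (B : 'M[C]_(m1, n2))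
  (D : 'M[C]_(m2, n1)) (E : 'M[C]_(m2, n2)) :
  ctmx (block_mx A B D E) = block_mx (ctmx A) (ctmx D) (ctmx B) (ctmx E).
Proof. by rewrite /ctmx map_block_mx tr_block_mx. Qed.

Lemma ctmx_delta n (j : 'I_n) : ctmx (delta_mx j 0 : 'cV[C]_n) = delta_mx 0 j.
Proof. by apply/matrixP=> i k; rewrite !ctmxE !mxE (rmorph_nat Num.conj) andbC. Qed.

Lemma unitmx_ctmx n (A : 'M[C]_n) : A \in unitmx -> ctmx A \in unitmx.
Proof.
move=> Au; have /mulmx1_unit[] // : ctmx A *m ctmx (invmx A) = 1%:M.
by rewrite -ctmx_mul mulVmx // ctmx1.
Qed.

Lemma usubmx_gram m1 m2 n (A : 'M[C]_(m1 + m2, n)) :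
  usubmx A *m ctmx (usubmx A) = ulsubmx (A *m ctmx A).
Proof. by rewrite -{3 4}(vsubmxK A) ctmx_col mul_col_row block_mxKul. Qed.

Lemma dsubmx_gram m1 m2 n (A : 'M[C]_(m1 + m2, n)) :
  dsubmx A *m ctmx (dsubmx A) = drsubmx (A *m ctmx A).
Proof. by rewrite -{3 4}(vsubmxK A) ctmx_col mul_col_row block_mxKdr. Qed.

Lemma blkdiag_gram n1 n2 (A : 'M[C]_n1) (B : 'M[C]_n2) :
  blkdiag (A *m ctmx A) (B *m ctmx B) = blkdiag A B *m ctmx (blkdiag A B).
Proof.
by rewrite /blkdiag ctmx_block !ctmx0 mulmx_block !mulmx0 !mul0mx !addr0 !add0r.
Qed.

Lemma unitmx_blkdiag n1 n2 (A : 'M[C]_n1) (B : 'M[C]_n2) :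
  A \in unitmx -> B \in unitmx -> blkdiag A B \in unitmx.
Proof. by rewrite !unitmxE /blkdiag det_ublock unitrM => -> ->. Qed.

End ConjugateTranspose.

Lemma mulmx1_invmx (R : comUnitRingType) n (A B : 'M[R]_n) :
  A *m B = 1%:M -> invmx A = B.
Proof.
move=> AB; have [Au _] := mulmx1_unit AB.
by rewrite -[invmx A]mulmx1 -AB mulmxA mulVmx // mul1mx.
Qed.

Lemma invmx_similar (R : comUnitRingType) n (T Y : 'M[R]_n) :
  T \in unitmx -> invmx (T *m Y *m invmx T) = T *m invmx Y *m invmx T.
Proof.
move=> Tu; have [Yu|Yu] := boolP (Y \in unitmx).
  apply: mulmx1_invmx; rewrite !mulmxA -(mulmxA (T *m Y)) mulVmx // mulmx1.
  by rewrite -(mulmxA T) mulmxV // mulmx1 mulmxV.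
have TYu : T *m Y *m invmx T \notin unitmx by rewrite !unitmx_mul (negPf Yu) andbF.
by rewrite (invmx_out TYu) (invmx_out Yu).
Qed.

Lemma char_poly_similar (R : fieldType) n (T B : 'M[R]_n) :
  T \in unitmx -> char_poly (T *m B *m invmx T) = char_poly B.
Proof.
move=> Tu; rewrite /char_poly.
set P := map_mx (@polyC R) T; set Pi := map_mx (@polyC R) (invmx T).
have PPi : P *m Pi = 1%:M by rewrite -map_mxM mulmxV // map_mx1.
have -> : char_poly_mx (T *m B *m invmx T) = P *m char_poly_mx B *m Pi.
  rewrite /char_poly_mx mulmxBr mulmxBl scalar_mxC -(mulmxA ('X%:M)) PPi mulmx1.
  by congr (_ - _); rewrite /P /Pi !map_mxM.
rewrite !det_mulmx mulrC mulrA -det_mulmx mulrC.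
by rewrite [Pi *m P]mulmx1C // det1 mulr1.
Qed.

Lemma trmxZ (R : pzSemiRingType) m n (a : R) (A : 'M[R]_(m, n)) :
  (a *: A)^T = a *: A^T.
Proof. by apply/matrixP=> i j; rewrite !mxE. Qed.

Lemma diag_mxZ (R : pzSemiRingType) n (c : R) (y : 'rV[R]_n) :
  diag_mx (c *: y) = c *: diag_mx y.
Proof. by apply/matrixP=> i j; rewrite !mxE mulrnAr. Qed.

Lemma diag_mx_delta (R : pzSemiRingType) n (c : 'rV[R]_n) (i : 'I_n) :
  diag_mx c *m delta_mx i i = c 0 i *: delta_mx i i.
Proof.
rewrite mul_diag_mx; apply/matrixP=> k l; rewrite !mxE.
by case: (eqVneq k i) => [->|] /=; rewrite ?mulr0.
Qed.

Lemma mxtrace_delta (R : pzSemiRingType) n (i : 'I_n) :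
  \tr (delta_mx i i : 'M[R]_n) = 1.
Proof.
rewrite /mxtrace (bigD1 i) //= big1 => [|k ki]; first by rewrite !mxE eqxx addr0.
by rewrite !mxE (negPf ki).
Qed.

Lemma diag_mx_unit (R : fieldType) n (d : 'rV[R]_n) :
  (forall i, d 0 i != 0) -> diag_mx d \in unitmx.
Proof. by move=> d_neq0; rewrite unitmxE det_diag unitfE; apply/prodf_neq0. Qed.

Lemma mulmx_unit_neq0 (R : fieldType) n m (A : 'M[R]_n) (e : 'M[R]_(n, m)) :
  A \in unitmx -> e != 0 -> A *m e != 0.
Proof. by move=> Au; apply: contraNneq => Ae0; rewrite -(mulKmx Au e) Ae0 mulmx0. Qed.

Lemma delta_mx_neq0 (R : nzSemiRingType) m n (i : 'I_m) (j : 'I_n) :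
  (delta_mx i j : 'M[R]_(m, n)) != 0.
Proof. by apply/negP => /eqP/matrixP/(_ i j); rewrite !mxE !eqxx => /eqP; rewrite oner_eq0. Qed.

Lemma card_neq0_le_rank_diag (F : fieldType) n (y : 'rV[F]_n) :
  (#|[pred j : 'I_n | (y 0 j != 0)%R]| <= \rank (diag_mx y))%N.
Proof.
set A := [pred j : 'I_n | (y 0 j != 0)%R]; pose f := @enum_val _ A.
have sub_diag : rowsub f (colsub f (diag_mx y)) = diag_mx (\row_i y 0 (f i)).
  apply/matrixP => i j; rewrite !mxE (inj_eq enum_val_inj).
  by case: (eqVneq i j) => [->|]; rewrite ?mulr1n ?mulr0n.
have <- : \rank (rowsub f (colsub f (diag_mx y))) = #|A|.
  by rewrite sub_diag mxrank_unit // diag_mx_unit // => i; rewrite mxE; have := enum_valP i.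
rewrite rowsubE (leq_trans (mxrankM_maxr _ _)) //.
have -> : colsub f (diag_mx y) = diag_mx y *m colsub f 1%:M.
  by rewrite mulmx_colsub mulmx1.
exact: mxrankM_maxl.
Qed.

Section Kronecker.
Variable R : comPzRingType.

Lemma tensmx11 m n : (1%:M : 'M[R]_m) *t (1%:M : 'M[R]_n) = 1%:M.
Proof.
apply/matrixP=> i j.
case: (mxtens_indexP i) => i0 i1; case: (mxtens_indexP j) => j0 j1.
rewrite tensmxE !mxE (inj_eq (can_inj (@mxtens_indexK m n))) xpair_eqE.
by case: (i0 == j0); case: (i1 == j1); rewrite ?mulr1n ?mulr0n ?mulr1 ?mulr0.
Qed.

Lemma mxtrace_tens m n (A : 'M[R]_m) (B : 'M[R]_n) : \tr (A *t B) = \tr A * \tr B.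
Proof. by rewrite /mxtrace mulr_sum; apply: eq_bigr => i _; rewrite !mxE. Qed.

Lemma tensmxDl m n p q (A B : 'M[R]_(m, n)) (D : 'M[R]_(p, q)) :
  (A + B) *t D = A *t D + B *t D.
Proof. by apply/matrixP=> i j; rewrite !mxE mulrDl. Qed.

Lemma tensmxZl m n p q (a : R) (A : 'M[R]_(m, n)) (D : 'M[R]_(p, q)) :
  (a *: A) *t D = a *: (A *t D).
Proof. by apply/matrixP=> i j; rewrite !mxE mulrA. Qed.

Lemma tensmxZr m n p q (a : R) (A : 'M[R]_(m, n)) (D : 'M[R]_(p, q)) :
  A *t (a *: D) = a *: (A *t D).
Proof. by apply/matrixP=> i j; rewrite !mxE mulrCA. Qed.

Lemma tensmx_sumr m n p q k (A : 'M[R]_(m, n)) (F : 'I_k -> 'M[R]_(p, q)) :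
  A *t (\sum_(i < k) F i) = \sum_(i < k) A *t F i.
Proof.
apply/matrixP=> i j; rewrite !mxE !summxE mulr_sumr.
by apply: eq_bigr => l _; rewrite !mxE.
Qed.

End Kronecker.

Lemma invmx_tens (R : fieldType) m n (A : 'M[R]_m) (B : 'M[R]_n) :
  A \in unitmx -> B \in unitmx -> invmx (A *t B) = invmx A *t invmx B.
Proof. by move=> Au Bu; apply: mulmx1_invmx; rewrite tensmx_mul !mulmxV // tensmx11. Qed.

Section Positivity.
Variable C : numClosedFieldType.

Lemma ctmx_inv n (A : 'M[C]_n) : A \in unitmx -> ctmx (invmx A) = invmx (ctmx A).
Proof. by move=> Au; apply/esym/mulmx1_invmx; rewrite -ctmx_mul mulVmx // ctmx1. Qed.

Lemma gram_diag_ge0 m n (B : 'M[C]_(m, n)) j : 0 <= (ctmx B *m B) j j.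
Proof. by rewrite !mxE sumr_ge0 // => i _; rewrite !mxE mulrC mul_conjC_ge0. Qed.

Lemma cV_gram_gt0 n (u : 'cV[C]_n) : u != 0 -> 0 < (ctmx u *m u) 0 0.
Proof.
move=> u_neq0; rewrite lt_def gram_diag_ge0 andbT; apply: contra u_neq0 => /eqP u0.
have term_ge0 (i : 'I_n) : true -> 0 <= (u i 0)^* * u i 0.
  by rewrite mulrC mul_conjC_ge0.
have /psumr_eq0P term0 : \sum_i (u i 0)^* * u i 0 = 0.
  by rewrite -[RHS]u0 !mxE; apply: eq_bigr => i _; rewrite !mxE.
apply/eqP/matrixP => i j; rewrite ord1 mxE.
by have /eqP := term0 term_ge0 i isT; rewrite mulrC mul_conjC_eq0 => /eqP.
Qed.

Lemma diag_quad_form n (A : 'M[C]_n) (j : 'I_n) :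
  A j j = (ctmx (delta_mx j 0 : 'cV[C]_n) *m A *m (delta_mx j 0 : 'cV[C]_n)) 0 0.
Proof. by rewrite ctmx_delta -(rowE j A) -(colE j (row j A)) !mxE. Qed.

Lemma spectral_quad_form n (A W : 'M[C]_n) (y : 'rV[C]_n) (j : 'I_n) :
  ctmx W *m W = 1%:M -> A = W *m diag_mx y *m ctmx W ->
  y 0 j = (ctmx (W *m (delta_mx j 0 : 'cV[C]_n)) *m A *m
           (W *m (delta_mx j 0 : 'cV[C]_n))) 0 0.
Proof.
move=> WW A_spec; have -> : y 0 j = diag_mx y j j by rewrite mxE eqxx mulr1n.
have <- : ctmx W *m A *m W = diag_mx y.
  by rewrite A_spec !mulmxA WW mul1mx -mulmxA WW mulmx1.
by rewrite diag_quad_form ctmx_mul !mulmxA.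
Qed.

Lemma hermitian_unitary_diag n (A : 'M[C]_n) : ctmx A = A ->
  exists (W : 'M[C]_n) (y : 'rV[C]_n),
    [/\ W *m ctmx W = 1%:M, ctmx W *m W = 1%:M & A = W *m diag_mx y *m ctmx W].
Proof.
move=> A_herm.
have /orthomx_spectralP A_spec : A \is normalmx.
  by apply/normalmxP; rewrite map_conj_trmx A_herm.
set P := spectralmx A in A_spec.
have PP : P *m ctmx P = 1%:M.
  by have /unitarymxP := spectral_unitarymx A; rewrite map_conj_trmx.
exists (ctmx P), (spectral_diag A); rewrite ctmxK; split; first exact: mulmx1C.
  exact: PP.
by rewrite -(mulmx1_invmx PP).
Qed.

Lemma posdef_unit n (K : 'M[C]_n) : posdef K -> K \in unitmx.
Proof.
case=> _ K_pos; apply/negPn/negP; rewrite unitmxE unitfE negbK => /det0P[w w_neq0 wK].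
have ctw_neq0 : ctmx w != 0 by apply: contra w_neq0 => /eqP/ctmx_eq0 ->.
by have := K_pos _ ctw_neq0; rewrite ctmxK wK mul0mx mxE ltxx.
Qed.

Lemma posdef_ge0 n (K : 'M[C]_n) (v : 'cV[C]_n) :
  posdef K -> 0 <= (ctmx v *m K *m v) 0 0.
Proof.
case=> _ K_pos; have [->|v_neq0] := eqVneq v 0; first by rewrite mulmx0 mxE.
exact/ltW/K_pos.
Qed.

Lemma posdef_invmx n (K : 'M[C]_n) : posdef K -> posdef (invmx K).
Proof.
move=> pK; have Ku := posdef_unit pK; case: pK => K_herm K_pos.
split; first by rewrite ctmx_inv // K_herm.
move=> v v_neq0; set w := invmx K *m v.
have -> : ctmx v *m invmx K *m v = ctmx w *m K *m w.
  by rewrite /w ctmx_mul ctmx_inv // K_herm mulmxA mulmxKV.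
by apply: K_pos; apply: mulmx_unit_neq0; rewrite // unitmx_inv.
Qed.

Lemma posdef_gram n (A : 'M[C]_n) : A \in unitmx -> posdef (A *m ctmx A).
Proof.
move=> Au; split; first by rewrite ctmx_mul ctmxK.
move=> v v_neq0.
have -> : ctmx v *m (A *m ctmx A) *m v = ctmx (ctmx A *m v) *m (ctmx A *m v).
  by rewrite ctmx_mul ctmxK !mulmxA.
by rewrite cV_gram_gt0 // mulmx_unit_neq0 // unitmx_ctmx.
Qed.

Lemma posdef_spectral_gt0 n (A W : 'M[C]_n) (y : 'rV[C]_n) (j : 'I_n) :
  posdef A -> ctmx W *m W = 1%:M -> A = W *m diag_mx y *m ctmx W -> 0 < y 0 j.
Proof.
move=> [_ A_pos] WW A_spec; rewrite (spectral_quad_form j WW A_spec) A_pos //.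
by rewrite mulmx_unit_neq0 ?delta_mx_neq0 // (mulmx1_unit WW).2.
Qed.

End Positivity.

Lemma mxtrace_similar_invmx (R : fieldType) n (T A B : 'M[R]_n) : T \in unitmx ->
  \tr (T *m A *m invmx T *m invmx (T *m B *m invmx T)) = \tr (A *m invmx B).
Proof.
move=> Tu; rewrite invmx_similar // !mulmxA -(mulmxA (T *m A)) mulVmx // mulmx1.
by rewrite mxtrace_mulC !mulmxA mulVmx // mul1mx.
Qed.

Lemma mxtrace_tens_diag_invmx (R : fieldType) N M (D X : 'M[R]_N) (a c : 'rV[R]_M) :
  (forall n, 1%:M + c 0 n *: X \in unitmx) ->
  \tr ((D *t diag_mx a) *m invmx (1%:M + X *t diag_mx c))
  = \sum_n a 0 n * \tr (D *m invmx (1%:M + c 0 n *: X)).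
Proof.
move=> shift_unit.
have -> : invmx (1%:M + X *t diag_mx c)
    = \sum_n invmx (1%:M + c 0 n *: X) *t delta_mx n n.
  apply: mulmx1_invmx; rewrite mulmx_sumr.
  transitivity (\sum_(n < M) (1%:M : 'M[R]_N) *t delta_mx n n).
    apply: eq_bigr => n _.
    rewrite -tensmx11 mulmxDl !tensmx_mul !mul1mx diag_mx_delta tensmxZr -tensmxZl.
    by rewrite -tensmxDl scalemxAl -[X in X + _]mul1mx -mulmxDl mulmxV.
  by rewrite -tensmx_sumr -mx1_sum_delta tensmx11.
rewrite mulmx_sumr raddf_sum /=; apply: eq_bigr => n _.
by rewrite tensmx_mul mxtrace_tens diag_mx_delta mxtraceZ mxtrace_delta mulr1 mulrC.
Qed.

Section UnitaryDiag.
Variables (C : numClosedFieldType) (n : nat) (W : 'M[C]_n).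
Hypotheses (WW : W *m ctmx W = 1%:M) (WW' : ctmx W *m W = 1%:M).

Lemma invmx_unitary_diag (d : 'rV[C]_n) : (forall i, d 0 i != 0) ->
  invmx (W *m diag_mx d *m ctmx W) = W *m diag_mx (\row_i (d 0 i)^-1) *m ctmx W.
Proof.
move=> d_neq0; apply: mulmx1_invmx.
rewrite !mulmxA -(mulmxA _ (ctmx W)) WW' mulmx1 -(mulmxA W) mulmx_diag.
have -> : diag_mx (\row_i (d 0 i * (\row_i (d 0 i)^-1) 0 i)) = 1%:M.
  by rewrite -diag_const_mx; congr diag_mx; apply/rowP => i; rewrite !mxE mulfV.
by rewrite mulmx1.
Qed.

Lemma unitmx_unitary_diag (d : 'rV[C]_n) : (forall i, d 0 i != 0) ->
  W *m diag_mx d *m ctmx W \in unitmx.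
Proof.
have [W_unit _] := mulmx1_unit WW.
by move=> d_neq0; rewrite !unitmx_mul diag_mx_unit // unitmx_ctmx // W_unit.
Qed.

Lemma mxtrace_invmx_shift (D : 'M[C]_n) (y : 'rV[C]_n) (k : C) :
  (forall j, 1 + k * y 0 j != 0) ->
  1%:M + k *: (W *m diag_mx y *m ctmx W) \in unitmx /\
  \tr (D *m invmx (1%:M + k *: (W *m diag_mx y *m ctmx W)))
    = \sum_j (ctmx W *m D *m W) j j / (1 + k * y 0 j).
Proof.
move=> shift_neq0; set X := W *m diag_mx y *m ctmx W; set z := \row_j (1 + k * y 0 j).
have z_neq0 j : z 0 j != 0 by rewrite mxE.
have shiftE : 1%:M + k *: X = W *m diag_mx z *m ctmx W.
  have -> : diag_mx z = 1%:M + k *: diag_mx y.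
    apply/matrixP=> i j; rewrite !mxE.
    by case: (eqVneq i j) => [->|]; rewrite ?mulr1n ?mulr0n ?mulr0 ?addr0.
  by rewrite mulmxDr mulmx1 mulmxDl WW -scalemxAr -scalemxAl.
rewrite shiftE unitmx_unitary_diag // invmx_unitary_diag //; split=> //.
rewrite mulmxA mxtrace_mulC !mulmxA mul_mx_diag /mxtrace.
by apply: eq_bigr => j _; rewrite !mxE.
Qed.

End UnitaryDiag.

Lemma perm_eq_sum_ord (R : nmodType) N (f g : 'I_N -> R) (F : R -> R) :
  perm_eq [seq f i | i <- enum 'I_N] [seq g i | i <- enum 'I_N] ->
  \sum_i F (f i) = \sum_i F (g i).
Proof.
have sum_seq h : \sum_i F (h i) = \sum_(x <- [seq h i | i <- enum 'I_N]) F x.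
  by rewrite big_map big_enum.
by move=> fg; rewrite !sum_seq (perm_big _ fg).
Qed.

Lemma eigvals_of_similar_diag (C : numClosedFieldType) n (A T : 'M[C]_n) (d s : 'rV[C]_n) :
  T \in unitmx -> A = T *m diag_mx d *m invmx T -> eigvals_of A s ->
  perm_eq [seq d 0 i | i <- enum 'I_n] [seq s 0 i | i <- enum 'I_n].
Proof.
move=> Tu ->; rewrite /eigvals_of char_poly_similar // char_poly_trig ?diag_mx_is_trig //.
move=> ds; apply: prod_XsubC_eq; rewrite !big_map.
have : \prod_(i < n) ('X - (d 0 i)%:P) = \prod_(i < n) ('X - (s 0 i)%:P).
  by rewrite -ds; apply: eq_bigr => i _; rewrite mxE eqxx mulr1n.
by rewrite /index_enum; case: index_enum_key.
Qed.

Lemma tail_sum_le_weighted_sum (R : numDomainType) N L (s st p : 'I_N -> R) :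
  (L < N)%N -> (forall i, 0 <= s i) -> (forall i, 0 <= p i <= 1) ->
  (N - L)%:R <= \sum_i p i ->
  perm_eq [seq s i | i <- enum 'I_N] [seq st i | i <- enum 'I_N] ->
  (forall i j : 'I_N, (i <= j)%N -> st j <= st i) ->
  \sum_(m < N | (L <= m)%N) st m <= \sum_i s i * p i.
Proof.
move=> LN s_ge0 p01 p_sum s_st st_dec; set t := st (Ordinal LN).
(* Compare both sides with the threshold [t], the largest of the tail values:
   [h x + t * p <= x * p] for [0 <= p <= 1], and the tail sum is [t] times the
   tail length plus the [h]-sum. *)
have /mapP[i0 _ t_def] : t \in [seq s i | i <- enum 'I_N].
  by rewrite (perm_mem s_st) map_f ?mem_enum.
have t_ge0 : 0 <= t by rewrite t_def.
pose h x := if x <= t then x - t else 0.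
have h_le i : h (s i) + t * p i <= s i * p i.
  have -> : s i * p i = (s i - t) * p i + t * p i by rewrite mulrBl subrK.
  have /andP[p_ge0 p_le1] := p01 i.
  rewrite lerD2r /h; case: ifP => [s_le_t|s_gt_t].
    by rewrite -subr_ge0 -[X in _ - X]mulr1 -mulrBr mulr_le0 ?subr_le0.
  have : t < s i by rewrite real_ltNge ?s_gt_t ?ger0_real.
  by move/ltW; rewrite -subr_ge0 => ?; rewrite mulr_ge0.
have h_tail : \sum_i h (st i) = \sum_(m < N | (L <= m)%N) st m - t * (N - L)%:R.
  have count_tail : \sum_(m < N | (L <= m)%N) (1 : R) = (N - L)%:R.
    by have := @big_geq_mkord R 0 +%R L N xpredT (fun _ => 1); rewrite sumr_const_nat => <-.
  rewrite (bigID (fun m : 'I_N => (L <= m)%N)) /= [X in _ + X]big1 ?addr0.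
    rewrite -count_tail mulr_sumr -sumrB; apply: eq_bigr => m Lm.
    by rewrite /h mulr1 st_dec.
  move=> m; rewrite -ltnNge => mL; rewrite /h; case: ifP => // st_le_t.
  by rewrite (@le_anti _ _ (st m) t) ?st_le_t ?st_dec //= ?subrr // ltnW.
apply: le_trans (ler_sum _ (fun i _ => h_le i)).
rewrite big_split /= (perm_eq_sum_ord h s_st) h_tail -mulr_sumr.
by rewrite -addrA lerDl addrC subr_ge0 ler_wpM2l.
Qed.

Lemma tail_sum_le_diag_unitary (C : numClosedFieldType) N L (Q : 'M[C]_N)
  (s st : 'rV[C]_N) (P : pred 'I_N) :
  (L < N)%N -> Q *m ctmx Q = 1%:M -> ctmx Q *m Q = 1%:M -> (forall i, 0 <= s 0 i) ->
  (N - L <= #|P|)%N ->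
  perm_eq [seq s 0 i | i <- enum 'I_N] [seq st 0 i | i <- enum 'I_N] ->
  (forall i j : 'I_N, (i <= j)%N -> st 0 j <= st 0 i) ->
  \sum_(m < N | (L <= m)%N) st 0 m <= \sum_(j < N | P j) (ctmx Q *m diag_mx s *m Q) j j.
Proof.
move=> LN QQ QQ' s_ge0 P_card s_st st_dec.
(* The weights [|Q_ij|^2] form a doubly stochastic matrix. *)
pose q i j := (Q i j)^* * Q i j.
have q_ge0 i j : 0 <= q i j by rewrite /q mulrC mul_conjC_ge0.
have row_sum i : \sum_j q i j = 1.
  have := congr1 (fun A : 'M[C]_N => A i i) QQ; rewrite !mxE eqxx mulr1n => <-.
  by apply: eq_bigr => j _; rewrite /q !mxE mulrC.
have col_sum j : \sum_i q i j = 1.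
  have := congr1 (fun A : 'M[C]_N => A j j) QQ'; rewrite !mxE eqxx mulr1n => <-.
  by apply: eq_bigr => i _; rewrite /q !mxE.
pose p i := \sum_(j < N | P j) q i j.
have -> : \sum_(j < N | P j) (ctmx Q *m diag_mx s *m Q) j j = \sum_i s 0 i * p i.
  rewrite [RHS](eq_bigr (fun i => \sum_(j < N | P j) s 0 i * q i j)) => [|i _]; last first.
    by rewrite /p mulr_sumr.
  rewrite exchange_big /=; apply: eq_bigr => j _; rewrite mxE.
  by apply: eq_bigr => i _; rewrite mul_mx_diag !mxE /q mulrAC mulrC.
apply: (tail_sum_le_weighted_sum (s := fun i => s 0 i)) => //.
  move=> i; rewrite sumr_ge0 //= -(row_sum i) [X in _ <= X](bigID P) /=.
  by rewrite lerDl sumr_ge0.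
rewrite /p exchange_big /= (eq_bigr (fun _ => 1)) => [|j _]; last exact: col_sum.
by rewrite sumr_const ler_nat.
Qed.

Lemma sum_kernel_le_sum_div (R : numFieldType) N (g y : 'I_N -> R) (k : R) :
  0 <= k -> (forall j, 0 <= y j) -> (forall j, 0 <= g j) ->
  \sum_(j < N | y j == 0) g j <= \sum_j g j / (1 + k * y j).
Proof.
move=> k_ge0 y_ge0 g_ge0; rewrite [X in _ <= X](bigID (fun j => y j == 0)) /=.
rewrite [X in _ <= X + _](eq_bigr g) => [|j /eqP ->]; last first.
  by rewrite mulr0 addr0 invr1 mulr1.
by rewrite lerDl sumr_ge0 // => j _; rewrite divr_ge0 // addr_ge0 // mulr_ge0.
Qed.

Lemma div_1_add_sq_le (R : numFieldType) (g u T : R) :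
  0 <= g -> 0 < u -> 1 <= T -> g / (1 + u * (T * T)) <= g / u / T.
Proof.
move=> g_ge0 u_gt0 T_ge1; have T_gt0 : 0 < T := lt_le_trans ltr01 T_ge1.
have uT_gt0 : 0 < u * T by rewrite mulr_gt0.
rewrite -mulrA -invfM ler_wpM2l // lef_pV2 ?posrE ?ltr_wpDl ?mulr_ge0 ?ltW //.
  rewrite mulrA; apply: le_lt_trans (ler_peMr (ltW uT_gt0) T_ge1) _.
  by rewrite ltrDr.
by rewrite !mulr_gt0.
Qed.

Section TrainingMSE.
Variables (C : numClosedFieldType) (N1 N2 M LS : nat).
Variables (Ct1 : 'M[C]_N1) (Ct2 : 'M[C]_N2) (Cr : 'M[C]_M) (Kq : 'M[C]_LS).
Variables (Kr U : 'M[C]_M) (a b : 'rV[C]_M).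
Hypotheses (Cr_unit : Cr \in unitmx) (Kq_pd : posdef Kq) (Kr_pd : posdef Kr).
Hypotheses (UU : U *m ctmx U = 1%:M) (Zr_diag : Cr *m ctmx Cr = U *m diag_mx a *m ctmx U).
Hypothesis Kr_diag : Kr = U *m diag_mx b *m ctmx U.

Implicit Types (S : 'M[C]_(N1 + N2, LS)) (W : 'M[C]_(N1 + N2)) (y : 'rV[C]_(N1 + N2)).

Local Notation Ct := (blkdiag Ct1 Ct2).
Local Notation D := (ctmx Ct *m Ct).
(* [F^H K_R^-1 F = info S *t (Cr^H Kr^-1 Cr)] for [F = (S^T *m Ct) *t Cr]. *)
Local Notation info S := (ctmx (S^T *m Ct) *m invmx Kq *m (S^T *m Ct)).

Let UU' : ctmx U *m U = 1%:M := mulmx1C UU.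

Lemma Zr_eig_gt0 n : 0 < a 0 n.
Proof. exact: posdef_spectral_gt0 (posdef_gram Cr_unit) UU' Zr_diag. Qed.

Lemma Kr_eig_gt0 n : 0 < b 0 n.
Proof. exact: posdef_spectral_gt0 Kr_pd UU' Kr_diag. Qed.

Lemma gain_diag_ge0 W j : 0 <= (ctmx W *m D *m W) j j.
Proof. by have := gram_diag_ge0 (Ct *m W) j; rewrite ctmx_mul !mulmxA. Qed.

Lemma info_herm S : ctmx (info S) = info S.
Proof. by rewrite ctmx_congr_herm // ctmx_inv ?posdef_unit // (proj1 Kq_pd). Qed.

Lemma info_scale S (T : C) : T \is Num.real -> info (T *: S) = (T * T) *: info S.
Proof.
move=> T_real; rewrite trmxZ -scalemxAl ctmxZ conj_Creal //.
by rewrite -!scalemxAl -scalemxAr scalerA.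
Qed.

Lemma info_spectral_quad S W y j :
  ctmx W *m W = 1%:M -> info S = W *m diag_mx y *m ctmx W ->
  y 0 j = (ctmx (S^T *m Ct *m W *m (delta_mx j 0 : 'cV[C]_(N1 + N2))) *m invmx Kq *m
           (S^T *m Ct *m W *m (delta_mx j 0 : 'cV[C]_(N1 + N2)))) 0 0.
Proof.
by move=> WW' info_spec; rewrite (spectral_quad_form j WW' info_spec) !ctmx_mul !mulmxA.
Qed.

Lemma info_spectral_ge0 S W y j :
  ctmx W *m W = 1%:M -> info S = W *m diag_mx y *m ctmx W -> 0 <= y 0 j.
Proof.
move=> WW' info_spec; rewrite (info_spectral_quad j WW' info_spec).
exact/posdef_ge0/posdef_invmx.
Qed.

Lemma eR_relay_diag S :
  eR Ct1 Ct2 Cr Kq Kr S =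
  \tr ((D *t diag_mx a) *m invmx (1%:M + info S *t diag_mx (\row_n (a 0 n / b 0 n)))).
Proof.
have b_neq0 n : b 0 n != 0 by rewrite gt_eqF ?Kr_eig_gt0.
(* With [E := U^H Cr], both relay factors are [E^H _ E] while [E E^H = diag a], so
   conjugating by [1 *t E^H] makes them diagonal. *)
set E := ctmx U *m Cr.
have Cr_E : Cr = U *m E by rewrite /E mulmxA UU mul1mx.
have EE : E *m ctmx E = diag_mx a.
  rewrite /E ctmx_mul ctmxK mulmxA -(mulmxA _ Cr) Zr_diag !mulmxA UU' mul1mx.
  by rewrite -mulmxA UU' mulmx1.
have CrCr : ctmx Cr *m Cr = ctmx E *m E by rewrite {1}Cr_E ctmx_mul -mulmxA.
have CrKCr : ctmx Cr *m invmx Kr *m Cr = ctmx E *m diag_mx (\row_n (b 0 n)^-1) *m E.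
  rewrite Kr_diag invmx_unitary_diag // {1}Cr_E ctmx_mul -!mulmxA.
  by rewrite (mulmxA (ctmx U)) UU' mul1mx.
rewrite /eR /= invmx_tens ?posdef_unit // ctmx_tens !tensmx_mul CrKCr CrCr.
set T := (1%:M : 'M[C]_(N1 + N2)) *t ctmx E.
have ctE_unit : ctmx E \in unitmx.
  by rewrite unitmx_ctmx // unitmx_mul unitmx_ctmx // (mulmx1_unit UU).1.
have TTi : T *m (1%:M *t invmx (ctmx E)) = 1%:M.
  by rewrite tensmx_mul mulmx1 mulmxV // tensmx11.
rewrite -[RHS](mxtrace_similar_invmx _ _ (mulmx1_unit TTi).1) (mulmx1_invmx TTi).
have aE : diag_mx a *m invmx (ctmx E) = E by rewrite -EE mulmxK.
congr (\tr (_ *m invmx _)); first by rewrite !tensmx_mul mul1mx mulmx1 -mulmxA aE.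
rewrite mulmxDr mulmx1 mulmxDl tensmx_mul mulmx1 mulmxV // tensmx11 !tensmx_mul mul1mx mulmx1.
have -> : diag_mx (\row_n (a 0 n / b 0 n)) = diag_mx (\row_n (b 0 n)^-1) *m diag_mx a.
  by rewrite mulmx_diag; congr diag_mx; apply/rowP => i; rewrite !mxE mulrC.
by rewrite -!mulmxA aE.
Qed.

Lemma eR_spectral S W y :
  W *m ctmx W = 1%:M -> ctmx W *m W = 1%:M -> info S = W *m diag_mx y *m ctmx W ->
  (forall j, 0 <= y 0 j) ->
  eR Ct1 Ct2 Cr Kq Kr S =
  \sum_n a 0 n * \sum_j (ctmx W *m D *m W) j j / (1 + a 0 n / b 0 n * y 0 j).
Proof.
move=> WW WW' info_spec y_ge0.
have shift_neq0 n j : 1 + a 0 n / b 0 n * y 0 j != 0.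
  rewrite gt_eqF // (lt_le_trans ltr01) // lerDl mulr_ge0 // ltW //.
  by rewrite divr_gt0 ?Zr_eig_gt0 ?Kr_eig_gt0.
rewrite eR_relay_diag info_spec mxtrace_tens_diag_invmx => [|n]; last first.
  by rewrite mxE; have [] := mxtrace_invmx_shift WW WW' D (shift_neq0 n).
apply: eq_bigr => n _; rewrite mxE.
by have [_ ->] := mxtrace_invmx_shift WW WW' D (shift_neq0 n).
Qed.

Lemma info_spectral_gt0 S W y j (B : 'M[C]_(N1 + N2, LS)) :
  B *m (S^T *m Ct) = 1%:M -> ctmx W *m W = 1%:M ->
  info S = W *m diag_mx y *m ctmx W -> 0 < y 0 j.
Proof.
move=> B_linv WW' info_spec; rewrite (info_spectral_quad j WW' info_spec).
have We_neq0 : W *m (delta_mx j 0 : 'cV[C]_(N1 + N2)) != 0.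
  by rewrite mulmx_unit_neq0 ?delta_mx_neq0 // (mulmx1_unit WW').2.
apply: (proj2 (posdef_invmx Kq_pd)); rewrite -mulmxA.
apply: contraNneq We_neq0 => /(congr1 (mulmx B)).
by rewrite mulmxA B_linv mul1mx mulmx0 => ->.
Qed.

Lemma eR_lt (Ct_unit : Ct \in unitmx) : (N1 + N2 <= LS)%N ->
  forall eps, 0 < eps -> exists S, eR Ct1 Ct2 Cr Kq Kr S < eps.
Proof.
move=> NL eps eps_gt0; set P0 := pid_mx (N1 + N2) : 'M[C]_(N1 + N2, LS).
have [W [y [WW WW' info_spec]]] := hermitian_unitary_diag (info_herm P0).
have P0_linv : invmx Ct *m P0 *m (P0^T *m Ct) = 1%:M.
  rewrite mulmxA -(mulmxA (invmx Ct)) tr_pid_mx mul_pid_mx minnn (minn_idPr NL).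
  by rewrite pid_mx_1 mulmx1 mulVmx.
have y_gt0 j := info_spectral_gt0 j P0_linv WW' info_spec.
pose g j := (ctmx W *m D *m W) j j.
pose u n j := a 0 n / b 0 n * y 0 j.
have u_gt0 n j : 0 < u n j by rewrite mulr_gt0 ?divr_gt0 ?Zr_eig_gt0 ?Kr_eig_gt0.
pose K := \sum_n \sum_j a 0 n * (g j / u n j).
have K_ge0 : 0 <= K.
  apply: sumr_ge0 => n _; apply: sumr_ge0 => j _.
  by rewrite mulr_ge0 ?divr_ge0 ?gain_diag_ge0 ?ltW ?Zr_eig_gt0.
pose T := K / eps + 1.
have T_ge1 : 1 <= T by rewrite lerDr divr_ge0 // ltW.
have T_gt0 : 0 < T := lt_le_trans ltr01 T_ge1.
have info_TP0 : info (T *: P0) = W *m diag_mx ((T * T) *: y) *m ctmx W.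
  by rewrite info_scale ?gtr0_real // info_spec diag_mxZ -scalemxAr -scalemxAl.
exists (T *: P0); rewrite (eR_spectral WW WW' info_TP0) => [|j]; last first.
  by rewrite mxE mulr_ge0 ?ltW ?mulr_gt0.
apply: (@le_lt_trans _ _ (K / T)).
  rewrite /K mulr_suml; apply: ler_sum => n _; rewrite mulr_sumr mulr_suml.
  apply: ler_sum => j _.
  rewrite [in X in _ / (1 + X)]mxE [X in _ / (1 + X)]mulrCA -/(u n j).
  rewrite [X in _ / (1 + X)]mulrC.
  rewrite -[X in _ <= X]mulrA ler_pM2l ?Zr_eig_gt0 //.
  exact: div_1_add_sq_le (gain_diag_ge0 _ _) (u_gt0 n j) T_ge1.
rewrite ltr_pdivrMr // /T mulrDr mulr1 mulrCA divff ?gt_eqF // mulr1.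
by rewrite ltrDl.
Qed.

Lemma info_kernel_card S W y : ctmx W *m W = 1%:M -> info S = W *m diag_mx y *m ctmx W ->
  (N1 + N2 - LS <= #|[pred j : 'I_(N1 + N2) | (y 0 j == 0)%R]|)%N.
Proof.
move=> WW' info_spec.
have rank_y : (\rank (diag_mx y) <= LS)%N.
  have -> : diag_mx y = ctmx W *m info S *m W.
    by rewrite info_spec !mulmxA WW' mul1mx -mulmxA WW' mulmx1.
  apply: leq_trans (mxrankM_maxl _ _) _; apply: leq_trans (mxrankM_maxr _ _) _.
  exact: leq_trans (mxrankM_maxr _ _) (rank_leq_row _).
have card_split := cardC [pred j : 'I_(N1 + N2) | (y 0 j == 0)%R].
rewrite card_ord in card_split; rewrite leq_subLR -{1}card_split addnC leq_add2r.
exact: leq_trans (card_neq0_le_rank_diag y) rank_y.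
Qed.

Lemma gain_spectral (Ct_unit : Ct \in unitmx) (st : 'rV[C]_(N1 + N2)) :
  eigvals_of (Ct *m ctmx Ct) st ->
  exists V (s : 'rV[C]_(N1 + N2)),
    [/\ V *m ctmx V = 1%:M, ctmx V *m V = 1%:M, D = V *m diag_mx s *m ctmx V,
        forall i, 0 <= s 0 i &
        perm_eq [seq s 0 i | i <- enum 'I_(N1 + N2)] [seq st 0 i | i <- enum 'I_(N1 + N2)]].
Proof.
move=> st_eig.
have [V [s [VV VV' D_spec]]] := hermitian_unitary_diag (ctmx_congr_herm Ct (ctmx1 _ _)).
rewrite mulmx1 in D_spec; exists V, s; split=> // [i|].
  have -> : s 0 i = (ctmx V *m D *m V) i i.
    by rewrite D_spec !mulmxA VV' mul1mx -mulmxA VV' mulmx1 mxE eqxx mulr1n.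
  exact: gain_diag_ge0.
apply: (eigvals_of_similar_diag (T := Ct *m V)) st_eig.
  by rewrite unitmx_mul Ct_unit (mulmx1_unit VV).1.
have -> : invmx (Ct *m V) = ctmx V *m invmx Ct.
  by apply: mulmx1_invmx; rewrite mulmxA -(mulmxA Ct) VV mulmx1 mulmxV.
by rewrite !mulmxA -(mulmxA _ V) -(mulmxA _ (V *m _)) -D_spec mulmxA mulmxK.
Qed.

Lemma eR_ge_tail_eigvals (Ct_unit : Ct \in unitmx) : (LS < N1 + N2)%N ->
  forall (sr : 'rV[C]_M) (st : 'rV[C]_(N1 + N2)),
  eigvals_of (Cr *m ctmx Cr) sr -> eigvals_of (Ct *m ctmx Ct) st ->
  (forall i j : 'I_(N1 + N2), (i <= j)%N -> st 0 j <= st 0 i) ->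
  forall S, (\sum_(n < M) sr 0 n) * (\sum_(m < N1 + N2 | (LS <= m)%N) st 0 m)
              <= eR Ct1 Ct2 Cr Kq Kr S.
Proof.
move=> LN sr st sr_eig st_eig st_dec S.
have [W [y [WW WW' info_spec]]] := hermitian_unitary_diag (info_herm S).
have y_ge0 j := info_spectral_ge0 j WW' info_spec.
rewrite (eR_spectral WW WW' info_spec y_ge0).
have [V [s [VV VV' D_spec s_ge0 s_st]]] := gain_spectral Ct_unit st_eig.
have sr_a : \sum_(n < M) sr 0 n = \sum_(n < M) a 0 n.
  apply/esym/(perm_eq_sum_ord id)/(eigvals_of_similar_diag (mulmx1_unit UU).1 _ sr_eig).
  by rewrite Zr_diag (mulmx1_invmx UU).
rewrite sr_a mulr_suml; apply: ler_sum => n _; rewrite ler_pM2l ?Zr_eig_gt0 //.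
apply: le_trans (sum_kernel_le_sum_div _ y_ge0 (gain_diag_ge0 W)); last first.
  by rewrite divr_ge0 // ltW ?Zr_eig_gt0 ?Kr_eig_gt0.
have WDW : ctmx W *m D *m W = ctmx (ctmx V *m W) *m diag_mx s *m (ctmx V *m W).
  by rewrite D_spec ctmx_mul ctmxK !mulmxA.
rewrite WDW; apply: (tail_sum_le_diag_unitary _ _ _ s_ge0 (info_kernel_card WW' info_spec)) => //.
- by rewrite ctmx_mul ctmxK mulmxA -(mulmxA _ W) WW mulmx1 VV'.
- by rewrite ctmx_mul ctmxK mulmxA -(mulmxA _ V) VV mulmx1 WW'.
Qed.

End TrainingMSE.

Lemma gram_rank_factor (C : numClosedFieldType) m n (S : 'M[C]_(m, n)) :
  exists T : 'M[C]_(m, \rank S), T *m ctmx T = S *m ctmx S.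
Proof.
set B := schmidt (row_base S).
have BB : B *m ctmx B = 1%:M.
  by have /unitarymxP := schmidt_unitarymx (row_base S) (rank_leq_col S); rewrite map_conj_trmx.
have S_sub : (S <= B)%MS by apply: submx_trans (schmidt_sub _); rewrite eq_row_base.
exists (S *m pinvmx B); set T := S *m pinvmx B.
by rewrite -[in RHS](mulmxKpV S_sub) -/T [in RHS]ctmx_mul mulmxA -(mulmxA T) BB mulmx1.
Qed.

Lemma eR_scalar_Kq_gram (C : numClosedFieldType) (N1 N2 M L L' : nat)
  (Ct1 : 'M[C]_N1) (Ct2 : 'M[C]_N2) (Cr Kr : 'M[C]_M) (q : C)
  (S : 'M[C]_(N1 + N2, L)) (S' : 'M[C]_(N1 + N2, L')) :
  q != 0 -> Kr \in unitmx -> S *m ctmx S = S' *m ctmx S' ->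
  eR Ct1 Ct2 Cr q%:M Kr S = eR Ct1 Ct2 Cr q%:M Kr S'.
Proof.
move=> q_neq0 Kr_unit SS'.
suff eR_gram L0 (T : 'M[C]_(N1 + N2, L0)) : eR Ct1 Ct2 Cr q%:M Kr T =
    \tr ((ctmx (blkdiag Ct1 Ct2) *m blkdiag Ct1 Ct2) *t (ctmx Cr *m Cr) *m
      invmx (1%:M + (q^-1 *: (ctmx (blkdiag Ct1 Ct2) *m (T *m ctmx T)^T *m blkdiag Ct1 Ct2))
                    *t (ctmx Cr *m invmx Kr *m Cr))).
  by rewrite !eR_gram SS'.
have q_unit : (q%:M : 'M[C]_L0) \in unitmx by rewrite unitmxE det_scalar unitrX // unitfE.
rewrite /eR /= invmx_tens // ctmx_tens !tensmx_mul invmx_scalar mul_mx_scalar.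
by rewrite -scalemxAl ctmx_mul trmx_mul ctmx_tr /ctmx trmxK !mulmxA.
Qed.

Theorem lemma1 (C : numClosedFieldType) (N1 N2 M LS : nat)
  (Ct1 : 'M[C]_N1) (Ct2 : 'M[C]_N2) (Cr : 'M[C]_M)
  (Kq : 'M[C]_LS) (Kr : 'M[C]_M) :
  Ct1 \in unitmx -> Ct2 \in unitmx -> Cr \in unitmx ->
  posdef Kq -> posdef Kr ->
  same_eigvecs (Cr *m ctmx Cr) Kr ->
  (* (i) *)
  ((N1 + N2 <= LS)%N ->
     forall eps : C, 0 < eps ->
       exists S : 'M[C]_(N1 + N2, LS), eR Ct1 Ct2 Cr Kq Kr S < eps)
  /\
  (* (ii) *)
  ((LS < N1 + N2)%N ->
     forall (sr : 'rV[C]_M) (st : 'rV[C]_(N1 + N2)),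
       eigvals_of (Cr *m ctmx Cr) sr ->
       eigvals_of (blkdiag (Ct1 *m ctmx Ct1) (Ct2 *m ctmx Ct2)) st ->
       (forall i j : 'I_(N1 + N2), (i <= j)%N -> st 0 j <= st 0 i) ->
       forall S : 'M[C]_(N1 + N2, LS),
         (\sum_(n < M) sr 0 n) * (\sum_(m < N1 + N2 | (LS <= m)%N) st 0 m)
           <= eR Ct1 Ct2 Cr Kq Kr S)
  /\
  (* (iii) *)
  (forall (q tau1 tau2 : C), 0 < q -> 0 < tau1 -> 0 < tau2 ->
     Kq = q%:M ->
     forall Sopt : 'M[C]_(N1 + N2, LS),
       pow_mx (usubmx Sopt) <= tau1 -> pow_mx (dsubmx Sopt) <= tau2 ->
       (forall S : 'M[C]_(N1 + N2, LS),
          pow_mx (usubmx S) <= tau1 -> pow_mx (dsubmx S) <= tau2 ->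
          eR Ct1 Ct2 Cr Kq Kr Sopt <= eR Ct1 Ct2 Cr Kq Kr S) ->
       forall r : nat, \rank Sopt = r ->
       exists (T1 : 'M[C]_(N1, r)) (T2 : 'M[C]_(N2, r)),
         pow_mx T1 = pow_mx (usubmx Sopt) /\
         pow_mx T2 = pow_mx (dsubmx Sopt) /\
         eR Ct1 Ct2 Cr (q%:M : 'M[C]_r) Kr (col_mx T1 T2)
           = eR Ct1 Ct2 Cr Kq Kr Sopt).
Proof.
move=> Ct1_unit Ct2_unit Cr_unit Kq_pd Kr_pd [U [a [b [UU [Zr_diag Kr_diag]]]]].
have Ct_unit := unitmx_blkdiag Ct1_unit Ct2_unit.
split; [|split].
- exact: eR_lt Cr_unit Kq_pd Kr_pd UU Zr_diag Kr_diag Ct_unit.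
- rewrite blkdiag_gram.
  exact: eR_ge_tail_eigvals Cr_unit Kq_pd Kr_pd UU Zr_diag Kr_diag Ct_unit.
-
  move=> q tau1 tau2 q_gt0 _ _ -> Sopt _ _ _ r <-.
  have [T TT] := gram_rank_factor Sopt.
  exists (usubmx T), (dsubmx T); rewrite /pow_mx !usubmx_gram !dsubmx_gram TT vsubmxK.
  by split=> //; split=> //; apply: eR_scalar_Kq_gram; rewrite ?gt_eqF ?posdef_unit.
Qed.
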